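(* Let $N\ge 1$, $p\ge 1$ and $\varepsilon>0$. For $i=1,\dots,N$ let $f_i:\mathbb R^p\to\mathbb R$ be convex and smooth and $g_i:\mathbb R^p\to\mathbb R$ be convex (possibly non-smooth), and suppose $F_i=f_i+g_i$ is Lipschitz continuous with Lipschitz constant $L_i$, i.e. $|F_i(y)-F_i(z)|\le L_i\|y-z\|$ for all $y,z\in\mathbb R^p$. Let $x^\ast$ be an optimal solution of $$\text{minimize}_{x\in\mathbb R^p}\ \frac1N\sum_{i=1}^N F_i(x),$$ and let $(x^\ast_{\mathrm{rel}},x^{1,\ast},\dots,x^{N,\ast})$ be an optimal solution of the relaxed problem $$\text{minimize}_{x,x^1,\dots,x^N\in\mathbb R^p}\ \frac1N\sum_{i=1}^N F_i(x^i)\quad\text{subject to}\quad \|x-x^i\|^2\le\varepsilon^2,\ i=1,\dots,N.$$ Then, with $L=\sum_{i=1}^N L_i$, $$\frac1N\sum_{i=1}^N\bigl(F_i(x^\ast_{\mathrm{rel}})-F_i(x^\ast)\bigr)\le \frac{\varepsilon}{N}L.$$ Furthermore, if the cost function $\frac1N\sum_{i=1}^N F_i$ is strongly convex with modulus $m>0$, then $$\|x^\ast_{\mathrm{rel}}-x^\ast\|^2\le \frac{2\varepsilon L}{Nm}.$$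
   Context: $\|\cdot\|$ denotes the Euclidean norm on $\mathbb R^p$. Strong convexity with modulus $m$ of a function $\phi$ means $\phi(y)\ge\phi(z)+g^T(y-z)+\frac m2\|y-z\|^2$ for all $y,z$ and all subgradients $g$ of $\phi$ at $z$. *)

From HB Require Import structures.
From mathcomp Require Import all_boot all_order all_algebra.
From mathcomp Require Import all_classical all_reals all_analysis.
Set Implicit Arguments. Unset Strict Implicit. Unset Printing Implicit Defensive.
Import Order.TTheory GRing.Theory Num.Theory.
Import numFieldNormedType.Exports.
Local Open Scope ring_scope.

Definition dotv {R : realType} {p : nat} (u v : 'rV[R]_p) : R :=
  \sum_(i < p) u ord0 i * v ord0 i.
Definition enorm {R : realType} {p : nat} (v : 'rV[R]_p) : R :=
  Num.sqrt (dotv v v).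

Definition convex_fun {R : realType} {p : nat} (f : 'rV[R]_p -> R) : Prop :=
  forall (x y : 'rV[R]_p) (t : R), 0 <= t -> t <= 1 ->
    f (t *: x + (1 - t) *: y) <= t * f x + (1 - t) * f y.

Definition smooth_fun {R : realType} {p : nat} (f : 'rV[R]_p -> R) : Prop :=
  forall x : 'rV[R]_p, differentiable f x.

Definition lipschitz_with {R : realType} {p : nat} (F : 'rV[R]_p -> R) (L : R) : Prop :=
  forall y z : 'rV[R]_p, `|F y - F z| <= L * enorm (y - z).

Definition subgradient {R : realType} {p : nat} (phi : 'rV[R]_p -> R) (z g : 'rV[R]_p) : Prop :=
  forall y, phi z + dotv g (y - z) <= phi y.

Definition strongly_convex {R : realType} {p : nat} (m : R) (phi : 'rV[R]_p -> R) : Prop :=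
  forall (y z g : 'rV[R]_p), subgradient phi z g ->
    phi z + dotv g (y - z) + m / 2 * enorm (y - z) ^+ 2 <= phi y.

Definition avg_cost {R : realType} {p N : nat} (F : 'I_N -> 'rV[R]_p -> R) (x : 'rV[R]_p) : R :=
  N%:R^-1 * \sum_(i < N) F i x.

Definition relaxed_cost {R : realType} {p N : nat} (F : 'I_N -> 'rV[R]_p -> R)
  (xs : 'I_N -> 'rV[R]_p) : R :=
  N%:R^-1 * \sum_(i < N) F i (xs i).

Definition relaxed_feasible {R : realType} {p N : nat} (eps : R) (x : 'rV[R]_p)
  (xs : 'I_N -> 'rV[R]_p) : Prop :=
  forall i : 'I_N, enorm (x - xs i) ^+ 2 <= eps ^+ 2.

From HB Require Import structures.
From mathcomp Require Import all_boot all_order all_algebra.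
From mathcomp Require Import all_classical all_reals all_analysis.
From mathcomp Require Import ring.
Set Implicit Arguments. Unset Strict Implicit. Unset Printing Implicit Defensive.
Import Order.TTheory GRing.Theory Num.Theory.
Import numFieldNormedType.Exports.
Local Open Scope ring_scope.

(* Every point x gives the feasible relaxed point (x, x, ..., x), so the relaxed
   optimum is at most the unrelaxed one; conversely x_rel is within eps of each
   x^i, so by the Lipschitz bounds the true cost at x_rel exceeds the relaxed
   optimum by at most (eps/N) L.  For the second claim, 0 is a subgradient of the
   cost at its minimizer x*, so strong convexity gives
   (m/2) ||x_rel - x*||^2 <= cost(x_rel) - cost(x* ) <= (eps/N) L. *)

Section EuclideanNorm.
Variables (R : realType) (p : nat).
Implicit Types v : 'rV[R]_p.

Lemma dot0v v : dotv 0 v = 0.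
Proof. by rewrite /dotv big1 // => i _; rewrite mxE mul0r. Qed.

Lemma enorm_ge0 v : 0 <= enorm v.
Proof. exact: sqrtr_ge0. Qed.

Lemma enorm0 : enorm (0 : 'rV[R]_p) = 0.
Proof. by rewrite /enorm dot0v sqrtr0. Qed.

Lemma enorm_const1_gt0 : (0 < p)%N -> 0 < enorm (const_mx 1 : 'rV[R]_p).
Proof.
move=> p_gt0; rewrite /enorm sqrtr_gt0 /dotv.
rewrite (eq_bigr (fun _ => 1)); last by move=> i _; rewrite mxE mulr1.
by rewrite sumr_const card_ord ltr0n.
Qed.

Lemma enorm_le_of_sqr v (eps : R) :
  0 <= eps -> enorm v ^+ 2 <= eps ^+ 2 -> enorm v <= eps.
Proof. by move=> eps_ge0; rewrite ler_pXn2r // ?nnegrE ?enorm_ge0. Qed.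

End EuclideanNorm.

Section Lipschitz.
Variables (R : realType) (p : nat) (F : 'rV[R]_p -> R) (L : R).
Hypothesis FL : lipschitz_with F L.

Lemma lipschitz_ge0 : (0 < p)%N -> 0 <= L.
Proof.
move=> p_gt0; have := le_trans (normr_ge0 _) (FL (const_mx 1) 0).
by rewrite subr0 pmulr_lge0 // enorm_const1_gt0.
Qed.

Lemma lipschitz_ler x y : F x <= F y + L * enorm (x - y).
Proof. by rewrite -lerBlDl; apply: le_trans (ler_norm _) (FL x y). Qed.

End Lipschitz.

Section StrongConvexity.
Variables (R : realType) (p : nat) (phi : 'rV[R]_p -> R) (z : 'rV[R]_p).
Hypothesis z_min : forall x, phi z <= phi x.

Lemma subgradient0_min : subgradient phi z 0.
Proof. by move=> y; rewrite dot0v addr0. Qed.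

Lemma strongly_convex_min_growth (m : R) y :
  strongly_convex m phi -> m / 2 * enorm (y - z) ^+ 2 <= phi y - phi z.
Proof.
by move=> /(_ y z 0 subgradient0_min); rewrite dot0v addr0 lerBrDl.
Qed.

End StrongConvexity.

Section RelaxedProblem.
Variables (R : realType) (p N : nat) (F : 'I_N -> 'rV[R]_p -> R) (eps : R).
Implicit Types (x y : 'rV[R]_p) (xs ys : 'I_N -> 'rV[R]_p).

Lemma avg_costB x y :
  N%:R^-1 * \sum_(i < N) (F i x - F i y) = avg_cost F x - avg_cost F y.
Proof. by rewrite /avg_cost sumrB mulrBr. Qed.

Lemma relaxed_feasible_const x : relaxed_feasible eps x (fun _ : 'I_N => x).
Proof. by move=> i; rewrite subrr enorm0 expr0n sqr_ge0. Qed.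

Lemma relaxed_min_le_avg_cost xs :
  (forall x ys, relaxed_feasible eps x ys -> relaxed_cost F xs <= relaxed_cost F ys) ->
  forall x, relaxed_cost F xs <= avg_cost F x.
Proof. by move=> xs_min x; apply: xs_min (relaxed_feasible_const x). Qed.

Lemma avg_cost_le_relaxed (L : 'I_N -> R) x xs :
  (0 < p)%N -> 0 <= eps -> (forall i, lipschitz_with (F i) (L i)) ->
  relaxed_feasible eps x xs ->
  avg_cost F x <= relaxed_cost F xs + eps / N%:R * \sum_(i < N) L i.
Proof.
move=> p_gt0 eps_ge0 FL feas.
rewrite /avg_cost /relaxed_cost [X in _ + X]mulrAC [X in _ + X]mulrC -mulrDr.
rewrite ler_wpM2l ?invr_ge0 //.
rewrite mulr_sumr -big_split /=; apply: ler_sum => i _.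
apply: le_trans (lipschitz_ler (FL i) x (xs i)) _.
by rewrite lerD2l mulrC ler_wpM2r ?(lipschitz_ge0 (FL i)) ?enorm_le_of_sqr.
Qed.

End RelaxedProblem.

Theorem theorem1 (R : realType) (N p : nat) (eps : R)
  (f g : 'I_N -> 'rV[R]_p -> R) (L : 'I_N -> R)
  (xstar xrel : 'rV[R]_p) (xs : 'I_N -> 'rV[R]_p) :
  (1 <= N)%N -> (1 <= p)%N -> 0 < eps ->
  (forall i, convex_fun (f i)) ->
  (forall i, smooth_fun (f i)) ->
  (forall i, convex_fun (g i)) ->
  (forall i, lipschitz_with (fun x => f i x + g i x) (L i)) ->
  (forall x, avg_cost (fun i x => f i x + g i x) xstar
             <= avg_cost (fun i x => f i x + g i x) x) ->
  relaxed_feasible eps xrel xs ->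
  (forall (x : 'rV[R]_p) (ys : 'I_N -> 'rV[R]_p), relaxed_feasible eps x ys ->
     relaxed_cost (fun i x => f i x + g i x) xs
     <= relaxed_cost (fun i x => f i x + g i x) ys) ->
  N%:R^-1 * \sum_(i < N) ((f i xrel + g i xrel) - (f i xstar + g i xstar))
    <= eps / N%:R * \sum_(i < N) L i
  /\
  (forall m : R, 0 < m ->
     strongly_convex m (avg_cost (fun i x => f i x + g i x)) ->
     enorm (xrel - xstar) ^+ 2 <= 2 * eps * (\sum_(i < N) L i) / (N%:R * m)).
Proof.
move=> _ p_gt0 eps_gt0 _ _ _ FL xstar_min feas xs_min.
set F := fun i x => f i x + g i x.
have gap : avg_cost F xrel - avg_cost F xstar <= eps / N%:R * \sum_(i < N) L i.
  rewrite lerBlDl; apply: le_trans (avg_cost_le_relaxed p_gt0 _ FL feas) _.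
    exact: ltW.
  by rewrite lerD2r (relaxed_min_le_avg_cost xs_min).
split; first by rewrite (avg_costB F).
move=> m m_gt0 sc; have := le_trans (strongly_convex_min_growth xstar_min xrel sc) gap.
set T := eps / N%:R * _; set e := enorm _ ^+ 2 => growth.
have -> : 2 * eps * (\sum_(i < N) L i) / (N%:R * m) = 2 / m * T.
  by rewrite /T invfM; ring.
have -> : e = 2 / m * (m / 2 * e) by field; rewrite gt_eqF.
by rewrite ler_wpM2l // divr_ge0 // ltW.
Qed.
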